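(* There exists a computable function $f$ that maps every PRSPDL-formula to a variable-free PRSPDL-formula such that, for every PRSPDL-formula $\varphi$, $\varphi$ is valid over $\ast$-separated models if, and only if, $f(\varphi)$ is valid over $\ast$-separated models (i.e., PRSPDL over $\ast$-separated models embeds into its variable-free fragment).
   Context: Fix a countable set $\mathit{Var}=\{p_1,p_2,\ldots\}$ of propositional variables and a countable set $AP=\{a_1,a_2,\ldots\}$ of atomic program terms. PRSPDL formulas and program terms are defined simultaneously by $\varphi ::= p \mid \bot \mid (\varphi\rightarrow\varphi)\mid [\alpha]\varphi$ and $\alpha ::= a \mid r_1\mid r_2\mid s_1\mid s_2\mid \varphi? \mid (\alpha;\alpha)\mid(\alpha\,\|\,\alpha)\mid \alpha^*$ ($p\in\mathit{Var}$, $a\in AP$; $r_1,r_2,s_1,s_2$ are special program constants; there is no union operation on programs). A ($\ast$-separated) model is $\mathfrak{M}=(S,\{R_a\}_{a\in AP},\ast,V)$ with $S\neq\varnothing$, $R_a\subseteq S\times S$, $\ast:S\times S\to 2^S$ an arbitrary function, and $V:\mathit{Var}\to2^S$. Relations and satisfaction: $(s,t)\in R_{\psi?}$ iff $s=t$ and $\mathfrak{M},s\models\psi$; $R_{\alpha;\beta}$ is relational composition; $R_{\alpha^*}$ is the reflexive transitive closure of $R_\alpha$; $(s,t)\in R_{\alpha\|\beta}$ iff there are $x_1,y_1,x_2,y_2\in S$ with $s\in x_1\ast x_2$, $t\in y_1\ast y_2$, $(x_1,y_1)\in R_\alpha$, $(x_2,y_2)\in R_\beta$; $(s,t)\in R_{r_1}$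 iff $s\in t\ast u$ for some $u$; $(s,t)\in R_{r_2}$ iff $s\in u\ast t$ for some $u$; $(s,t)\in R_{s_1}$ iff $t\in s\ast u$ for some $u$; $(s,t)\in R_{s_2}$ iff $t\in u\ast s$ for some $u$; $\mathfrak{M},s\models p$ iff $s\in V(p)$; $\bot$ is never true; $\rightarrow$ is classical; $\mathfrak{M},s\models[\alpha]\psi$ iff $\psi$ holds at all $R_\alpha$-successors of $s$. A formula is valid over $\ast$-separated models if true at every state of every such model. A formula is variable-free if it contains no propositional variables. *)

From Stdlib Require Import Arith List Relations.
Import ListNotations.

Inductive form : Type :=
| FVar : nat -> form
| FBot : form
| FImp : form -> form -> form
| FBox : prog -> form -> form
with prog : Type :=
| PAtom : nat -> prog
| Pr1 : prog
| Pr2 : prog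
| Ps1 : prog
| Ps2 : prog
| PTest : form -> prog
| PSeq : prog -> prog -> prog
| PPar : prog -> prog -> prog
| PStar : prog -> prog.

Fixpoint var_free (f : form) : Prop :=
  match f with
  | FVar _ => False
  | FBot => True
  | FImp a b => var_free a /\ var_free b
  | FBox a g => var_free_prog a /\ var_free g
  end
with var_free_prog (a : prog) : Prop :=
  match a with
  | PAtom _ | Pr1 | Pr2 | Ps1 | Ps2 => True
  | PTest g => var_free g
  | PSeq a b | PPar a b => var_free_prog a /\ var_free_prog b
  | PStar a => var_free_prog a
  end.

Record model : Type := {
  st : Type;
  st_ne : inhabited st;
  Rat : nat -> st -> st -> Prop;
  mer : st -> st -> st -> Prop;           (* mer x y s  <->  s \in x * y *)
  val : nat -> st -> Prop
}.

Fixpoint sat (M : model) (f : form) (s : st M) : Prop :=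
  match f with
  | FVar p => val M p s
  | FBot => False
  | FImp a b => sat M a s -> sat M b s
  | FBox a g => forall t, rel M a s t -> sat M g t
  end
with rel (M : model) (a : prog) (s t : st M) : Prop :=
  match a with
  | PAtom n => Rat M n s t
  | PTest g => s = t /\ sat M g s
  | PSeq a b => exists u, rel M a s u /\ rel M b u t
  | PStar a => clos_refl_trans (st M) (fun x y => rel M a x y) s t
  | PPar a b => exists x1 y1 x2 y2,
      mer M x1 x2 s /\ mer M y1 y2 t /\ rel M a x1 y1 /\ rel M b x2 y2
  | Pr1 => exists u, mer M t u s
  | Pr2 => exists u, mer M u t s
  | Ps1 => exists u, mer M s u t
  | Ps2 => exists u, mer M u s t
  end.

Definition valid (f : form) : Prop := forall (M : model) (s : st M), sat M f s.

Inductive recf : Type :=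
| RZero : recf
| RSucc : recf
| RProj : nat -> recf
| RComp : recf -> list recf -> recf
| RPrec : recf -> recf -> recf
| RMu : recf -> recf.

Inductive eval : recf -> list nat -> nat -> Prop :=
| ev_zero args : eval RZero args 0
| ev_succ x args : eval RSucc (x :: args) (S x)
| ev_proj i args : i < length args -> eval (RProj i) args (nth i args 0)
| ev_comp g hs args ys y :
    evals hs args ys -> eval g ys y -> eval (RComp g hs) args y
| ev_prec0 g h rest y : eval g rest y -> eval (RPrec g h) (0 :: rest) y
| ev_precS g h n rest y z :
    eval (RPrec g h) (n :: rest) y -> eval h (n :: y :: rest) z ->
    eval (RPrec g h) (S n :: rest) z
| ev_mu g args n :
    eval g (n :: args) 0 ->
    (forall m, m < n -> exists k, eval g (m :: args) (S k)) ->
    eval (RMu g) args n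
with evals : list recf -> list nat -> list nat -> Prop :=
| evs_nil args : evals [] args []
| evs_cons h hs args y ys :
    eval h args y -> evals hs args ys -> evals (h :: hs) args (y :: ys).

Definition cpair (n m : nat) : nat := (n + m) * (n + m + 1) / 2 + m.

Fixpoint code_form (f : form) : nat :=
  match f with
  | FVar p => cpair 0 p
  | FBot => cpair 1 0
  | FImp a b => cpair 2 (cpair (code_form a) (code_form b))
  | FBox a g => cpair 3 (cpair (code_prog a) (code_form g))
  end
with code_prog (a : prog) : nat :=
  match a with
  | PAtom n => cpair 0 n
  | Pr1 => cpair 1 0
  | Pr2 => cpair 2 0
  | Ps1 => cpair 3 0
  | Ps2 => cpair 4 0
  | PTest g => cpair 5 (code_form g)
  | PSeq a b => cpair 6 (cpair (code_prog a) (code_prog b))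
  | PPar a b => cpair 7 (cpair (code_prog a) (code_prog b))
  | PStar a => cpair 8 (code_prog a)
  end.

Definition computable_form_fun (f : form -> form) : Prop :=
  exists p : recf, forall phi : form, eval p [code_form phi] (code_form (f phi)).

(* Propositional variables can be simulated by fresh atomic programs: the
   translation sends p_i to <a_(2i+1)>T (written ~[a_(2i+1)]bot) and renames a_n
   to a_(2n), leaving r1, r2, s1, s2, tests and the program operations alone.
   Since the merge function is untouched, a model of the translated formula is a
   model of the original one in which p_i holds exactly where a_(2i+1) has a
   successor; conversely any valuation is realised by letting a_(2i+1) relate the
   points of V(p_i) to everything.  On Goedel codes the translation is a
   course-of-values recursion, hence mu-recursive. *)

From Stdlib Require Import Arith List Lia Relations Classical.
Import ListNotations.

Fixpoint devar_form (phi : form) : form :=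
  match phi with
  | FVar p => FImp (FBox (PAtom (2 * p + 1)) FBot) FBot
  | FBot => FBot
  | FImp a b => FImp (devar_form a) (devar_form b)
  | FBox a g => FBox (devar_prog a) (devar_form g)
  end
with devar_prog (a : prog) : prog :=
  match a with
  | PAtom n => PAtom (2 * n)
  | Pr1 => Pr1
  | Pr2 => Pr2
  | Ps1 => Ps1
  | Ps2 => Ps2
  | PTest g => PTest (devar_form g)
  | PSeq a b => PSeq (devar_prog a) (devar_prog b)
  | PPar a b => PPar (devar_prog a) (devar_prog b)
  | PStar a => PStar (devar_prog a)
  end.

Scheme form_mut_ind := Induction for form Sort Prop
with prog_mut_ind := Induction for prog Sort Prop.
Combined Scheme form_prog_ind from form_mut_ind, prog_mut_ind.

Lemma var_free_devar :
  (forall phi, var_free (devar_form phi)) /\ (forall a, var_free_prog (devar_prog a)).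
Proof. apply form_prog_ind; cbn; auto. Qed.

Lemma clos_refl_trans_iff (A : Type) (Q Q' : A -> A -> Prop) :
  (forall s t, Q s t <-> Q' s t) -> forall s t, clos_refl_trans A Q s t <-> clos_refl_trans A Q' s t.
Proof.
  intros E s t; split; induction 1; eauto using rt_refl, rt_trans, rt_step; apply rt_step, E; auto.
Qed.

Section DevarSemantics.

Variables (State : Type) (State_ne : inhabited State) (merge : State -> State -> State -> Prop).
Variables (R R' : nat -> State -> State -> Prop) (v v' : nat -> State -> Prop).
Hypothesis R'_even : forall n s t, R' (2 * n) s t <-> R n s t.
Hypothesis v_odd : forall i s, v i s <-> exists t, R' (2 * i + 1) s t.

Let M := Build_model State State_ne R merge v.
Let M' := Build_model State State_ne R' merge v'.

Lemma sat_devar :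
  (forall phi s, sat M phi s <-> sat M' (devar_form phi) s) /\
  (forall a s t, rel M a s t <-> rel M' (devar_prog a) s t).
Proof.
  apply form_prog_ind; intros; cbn [sat rel devar_form devar_prog Rat mer val st M M'] in *.
  - rewrite v_odd. split.
    + intros [t Ht] Hnone. exact (Hnone t Ht).
    + intros Hsome. apply NNPP. intros Hnone. apply Hsome. intros t Ht. apply Hnone. eauto.
  - tauto.
  - rewrite H, H0. tauto.
  - split; intros Hbox t Ht; apply H0, Hbox, H, Ht.
  - symmetry; apply R'_even.
  - tauto.
  - tauto.
  - tauto.
  - tauto.
  - rewrite H. tauto.
  - split; intros (u & Hsu & Hut); exists u; split; try apply H; try apply H0; auto.
  - split; intros (x1 & y1 & x2 & y2 & Hs & Ht & H1 & H2); exists x1, y1, x2, y2;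
      repeat split; auto; try apply H; try apply H0; auto.
  - now apply clos_refl_trans_iff.
Qed.

End DevarSemantics.

Lemma valid_devar phi : valid phi <-> valid (devar_form phi).
Proof.
  split.
  - intros Hv [State State_ne R' merge v'] s.
    apply (proj1 (sat_devar State State_ne merge (fun n => R' (2 * n)) R'
                    (fun i s => exists t, R' (2 * i + 1) s t) v'
                    (fun _ _ _ => iff_refl _) (fun _ _ => iff_refl _))).
    apply Hv.
  - intros Hv [State State_ne R merge v] s.
    pose (R' := fun n =>
            if Nat.even n then R (Nat.div2 n) else fun s (_ : State) => v (Nat.div2 n) s).
    assert (R'_even : forall n s t, R' (2 * n) s t <-> R n s t).
    { intros. unfold R'. now rewrite Nat.even_mul, Nat.div2_double. }
    assert (v_odd : forall i s, v i s <-> exists t, R' (2 * i + 1) s t).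
    { intros. unfold R'. rewrite Nat.add_1_r, Nat.even_succ, Nat.odd_mul, Nat.div2_succ_double.
      cbn. firstorder. }
    apply (proj1 (sat_devar State State_ne merge R R' v v R'_even v_odd)).
    apply Hv.
Qed.

Definition computes (n : nat) (p : recf) (F : list nat -> nat) : Prop :=
  forall l, length l = n -> eval p l (F l).

Definition computable (n : nat) (F : list nat -> nat) : Prop := exists p, computes n p F.

Definition computable1 (f : nat -> nat) : Prop := computable 1 (fun l => f (nth 0 l 0)).

Definition computable2 (f : nat -> nat -> nat) : Prop :=
  computable 2 (fun l => f (nth 0 l 0) (nth 1 l 0)).

Lemma computable_ext n F F' :
  computable n F -> (forall l, length l = n -> F l = F' l) -> computable n F'.
Proof. intros [p Hp] E. exists p. intros l Hl. rewrite <- E by exact Hl. auto. Qed.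

Lemma computable_proj n i : i < n -> computable n (fun l => nth i l 0).
Proof. intros Hi. exists (RProj i). intros l Hl. constructor. lia. Qed.

Lemma computable_comp n m G (As : list (list nat -> nat)) :
  computable m G -> length As = m -> Forall (computable n) As ->
  computable n (fun l => G (map (fun A => A l) As)).
Proof.
  intros [g Hg] Hm HAs.
  assert (Hhs : exists hs, forall l, length l = n -> evals hs l (map (fun A => A l) As)).
  { clear Hm. induction HAs as [|A As HA _ IH].
    - exists []. constructor.
    - destruct HA as [h Hh]; destruct IH as [hs Hhs].
      exists (h :: hs). intros l Hl. constructor; auto. }
  destruct Hhs as [hs Hhs]. exists (RComp g hs). intros l Hl.
  econstructor; [now apply Hhs|]. apply Hg. now rewrite length_map.
Qed.

Lemma computable_app1 n f A : computable1 f -> computable n A -> computable n (fun l => f (A l)).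
Proof. intros Hf HA. exact (computable_comp n 1 _ [A] Hf eq_refl (Forall_cons _ HA (Forall_nil _))). Qed.

Lemma computable_app2 n f A B :
  computable2 f -> computable n A -> computable n B -> computable n (fun l => f (A l) (B l)).
Proof.
  intros Hf HA HB.
  exact (computable_comp n 2 _ [A; B] Hf eq_refl (Forall_cons _ HA (Forall_cons _ HB (Forall_nil _)))).
Qed.

Lemma computable_zero n : computable n (fun _ => 0).
Proof. exists RZero. intros l _. constructor. Qed.

Lemma computable_S n A : computable n A -> computable n (fun l => S (A l)).
Proof.
  apply computable_app1. exists RSucc. intros [|x l] Hl; [discriminate|]. constructor.
Qed.

Lemma computable_const n c : computable n (fun _ => c).
Proof. induction c; [apply computable_zero | now apply computable_S]. Qed.

Fixpoint prim_rec (G H : list nat -> nat) (k : nat) (r : list nat) : nat :=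
  match k with 0 => G r | S k => H (k :: prim_rec G H k r :: r) end.

Lemma computes_prec n g h G H :
  computes n g G -> computes (S (S n)) h H ->
  computes (S n) (RPrec g h) (fun l => prim_rec G H (hd 0 l) (tl l)).
Proof.
  intros Hg Hh [|k r] Hl; [discriminate|]. injection Hl as Hr. cbn.
  induction k; cbn.
  - constructor. now apply Hg.
  - econstructor; [exact IHk|]. apply Hh. cbn. lia.
Qed.

Lemma computable_rec1 (F : nat -> nat) (H : nat -> nat -> nat) :
  (forall k, F (S k) = H k (F k)) -> computable2 H -> computable1 F.
Proof.
  intros E [h Hh]. destruct (computable_const 0 (F 0)) as [g Hg].
  eapply computable_ext; [exists (RPrec g h); exact (computes_prec 0 g h _ _ Hg Hh)|].
  intros [|k [|]] Hl; try discriminate. cbn.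
  induction k; cbn; [reflexivity|]. now rewrite IHk, E.
Qed.

Lemma computable_rec2 (F : nat -> nat -> nat) (G : nat -> nat) (H : nat -> nat -> nat -> nat) :
  (forall y, F 0 y = G y) -> (forall k y, F (S k) y = H k (F k y) y) ->
  computable1 G -> computable 3 (fun l => H (nth 0 l 0) (nth 1 l 0) (nth 2 l 0)) ->
  computable2 F.
Proof.
  intros E0 E [g Hg] [h Hh].
  eapply computable_ext; [exists (RPrec g h); exact (computes_prec 1 g h _ _ Hg Hh)|].
  intros [|k [|y []]] Hl; try discriminate. cbn.
  induction k; cbn; [now rewrite E0|]. now rewrite IHk, E.
Qed.

Lemma computable_add n A B : computable n A -> computable n B -> computable n (fun l => A l + B l).
Proof.
  apply computable_app2, (computable_rec2 Nat.add (fun y => y) (fun _ a _ => S a)); auto.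
  - apply computable_proj; lia.
  - apply computable_S, computable_proj; lia.
Qed.

Lemma computable_mul n A B : computable n A -> computable n B -> computable n (fun l => A l * B l).
Proof.
  apply computable_app2, (computable_rec2 Nat.mul (fun _ => 0) (fun _ a y => y + a)); auto.
  - apply computable_zero.
  - apply computable_add; apply computable_proj; lia.
Qed.

Lemma computable_sub n A B : computable n A -> computable n B -> computable n (fun l => A l - B l).
Proof.
  intros HA HB.
  assert (Hpred : computable1 Nat.pred).
  { apply (computable_rec1 _ (fun k _ => k)); [reflexivity|]. apply computable_proj; lia. }
  refine (computable_app2 n (fun b a => a - b) B A _ HB HA).
  apply (computable_rec2 _ (fun a => a) (fun _ d _ => Nat.pred d)); intros; try lia.
  - apply computable_proj; lia.
  - apply computable_app1; [exact Hpred|]. apply computable_proj; lia.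
Qed.

Lemma computable_if_eqb n A B C D :
  computable n A -> computable n B -> computable n C -> computable n D ->
  computable n (fun l => if A l =? B l then C l else D l).
Proof.
  intros HA HB HC HD.
  pose (is_eq := fun l => 1 - ((A l - B l) + (B l - A l))).
  eapply computable_ext with (F := fun l => is_eq l * C l + (1 - is_eq l) * D l).
  - unfold is_eq. repeat first [ apply computable_add | apply computable_mul
                                | apply computable_sub | apply computable_const | assumption ].
  - intros l _. unfold is_eq. destruct (Nat.eqb_spec (A l) (B l)); lia.
Qed.

Fixpoint triangle (w : nat) : nat := match w with 0 => 0 | S k => triangle k + S k end.

Lemma triangle_le_mono a b : a <= b -> triangle a <= triangle b.
Proof. induction 1; cbn; lia. Qed.

Lemma le_triangle w : w <= triangle w.
Proof. induction w; cbn; lia. Qed.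

Lemma cpair_triangle a b : cpair a b = triangle (a + b) + b.
Proof.
  assert (Htri : forall w, triangle w * 2 = w * (w + 1)) by (induction w; cbn; nia).
  unfold cpair. now rewrite <- Htri, Nat.div_mul.
Qed.

Lemma le_cpair_l a b : a <= cpair a b.
Proof. rewrite cpair_triangle. pose proof (le_triangle (a + b)). lia. Qed.

Lemma le_cpair_r a b : b <= cpair a b.
Proof. rewrite cpair_triangle. lia. Qed.

Lemma lt_cpair_r t x : 0 < t -> x < cpair t x.
Proof. intros. rewrite cpair_triangle. pose proof (le_triangle (t + x)). lia. Qed.

Fixpoint cdiag (z : nat) : nat :=
  match z with
  | 0 => 0
  | S z => if S z <? triangle (S (cdiag z)) then cdiag z else S (cdiag z)
  end.

Lemma cdiag_spec z : triangle (cdiag z) <= z < triangle (S (cdiag z)).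
Proof.
  induction z as [|z IH]; [cbn; lia|]. cbn [cdiag].
  destruct (Nat.ltb_spec (S z) (triangle (S (cdiag z)))); cbn [triangle] in *; lia.
Qed.

Lemma cdiag_cpair a b : cdiag (cpair a b) = a + b.
Proof.
  pose proof (cdiag_spec (cpair a b)) as Hz. rewrite cpair_triangle in *.
  destruct (Nat.lt_trichotomy (cdiag (triangle (a + b) + b)) (a + b)) as [Hlt|[Heq|Hgt]];
    [apply triangle_le_mono in Hlt | exact Heq | apply triangle_le_mono in Hgt]; cbn in *; lia.
Qed.

Definition csnd (z : nat) : nat := z - triangle (cdiag z).
Definition cfst (z : nat) : nat := cdiag z - csnd z.

Lemma csnd_cpair a b : csnd (cpair a b) = b.
Proof. unfold csnd. rewrite cdiag_cpair, cpair_triangle. lia. Qed.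

Lemma cfst_cpair a b : cfst (cpair a b) = a.
Proof. unfold cfst. rewrite csnd_cpair, cdiag_cpair. lia. Qed.

Lemma computable_triangle n A : computable n A -> computable n (fun l => triangle (A l)).
Proof.
  apply computable_app1, (computable_rec1 _ (fun k a => a + S k)); [reflexivity|].
  apply computable_add; [|apply computable_S]; apply computable_proj; lia.
Qed.

Lemma computable_cpair n A B : computable n A -> computable n B -> computable n (fun l => cpair (A l) (B l)).
Proof.
  intros HA HB. eapply computable_ext; [|intros l _; symmetry; apply cpair_triangle].
  apply computable_add; [apply computable_triangle, computable_add|]; assumption.
Qed.

Lemma computable_cdiag n A : computable n A -> computable n (fun l => cdiag (A l)).
Proof.
  apply computable_app1.
  apply (computable_rec1 _ (fun z w => if triangle (S w) - S z =? 0 then S w else w)).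
  - intros z. cbn [cdiag]. destruct (Nat.ltb_spec (S z) (triangle (S (cdiag z))));
      destruct (Nat.eqb_spec (triangle (S (cdiag z)) - S z) 0); lia.
  - apply computable_if_eqb; [apply computable_sub|apply computable_const|apply computable_S|];
      try apply computable_triangle; try apply computable_S; apply computable_proj; lia.
Qed.

Lemma computable_csnd n A : computable n A -> computable n (fun l => csnd (A l)).
Proof. intros HA. apply computable_sub, computable_triangle, computable_cdiag; assumption. Qed.

Lemma computable_cfst n A : computable n A -> computable n (fun l => cfst (A l)).
Proof. intros HA. apply computable_sub; [apply computable_cdiag|apply computable_csnd]; assumption. Qed.

(* [history step k] below is the nested pair (v_(k-1), (v_(k-2), ... (v_0, 0))),
   from which [lookup k h i] reads off v_i. *)
Definition lookup (k h i : nat) : nat := cfst (Nat.iter (k - 1 - i) csnd h).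

Lemma computable_lookup n K H I :
  computable n K -> computable n H -> computable n I ->
  computable n (fun l => lookup (K l) (H l) (I l)).
Proof.
  intros HK HH HI. apply computable_cfst.
  refine (computable_app2 n (fun j h => Nat.iter j csnd h) _ _ _ _ HH).
  - apply (computable_rec2 _ (fun h => h) (fun _ a _ => csnd a)); try reflexivity.
    + apply computable_proj; lia.
    + apply computable_csnd, computable_proj; lia.
  - repeat apply computable_sub; auto using computable_const.
Qed.

Section CourseOfValues.

Variable step : nat -> nat -> nat.

Fixpoint history (k : nat) : nat :=
  match k with 0 => 0 | S k => cpair (step k (history k)) (history k) end.

Definition course_of_values (k : nat) : nat := step k (history k).

Lemma lookup_history k i : i < k -> lookup k (history k) i = course_of_values i.
Proof.
  intros Hik. unfold lookup.
  assert (Hdrop : forall j i, Nat.iter j csnd (history (S (j + i))) = history (S i)).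
  { induction j as [|j IH]; intros i'; [reflexivity|].
    rewrite Nat.iter_succ, Nat.add_succ_comm, IH. cbn [history]. apply csnd_cpair. }
  replace k with (S (k - 1 - i + i)) at 2 by lia.
  rewrite Hdrop. cbn [history]. apply cfst_cpair.
Qed.

Lemma computable_history : computable2 step -> computable1 history.
Proof.
  intros Hstep. apply (computable_rec1 _ (fun k a => cpair (step k a) a)); [reflexivity|].
  apply computable_cpair; [apply computable_app2; [exact Hstep|..]|]; apply computable_proj; lia.
Qed.

End CourseOfValues.

Definition devar_form_step (n h : nat) : nat :=
  let x := csnd n in
  let sub i := lookup n h i in
  if cfst n =? 0 then code_form (devar_form (FVar x))
  else if cfst n =? 1 then n
  else if cfst n =? 2 then cpair 2 (cpair (cfst (sub (cfst x))) (cfst (sub (csnd x))))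
  else cpair 3 (cpair (csnd (sub (cfst x))) (cfst (sub (csnd x)))).

Definition devar_prog_step (n h : nat) : nat :=
  let x := csnd n in
  let sub i := lookup n h i in
  if cfst n =? 0 then code_prog (devar_prog (PAtom x))
  else if cfst n =? 5 then cpair 5 (cfst (sub x))
  else if cfst n =? 6 then cpair 6 (cpair (csnd (sub (cfst x))) (csnd (sub (csnd x))))
  else if cfst n =? 7 then cpair 7 (cpair (csnd (sub (cfst x))) (csnd (sub (csnd x))))
  else if cfst n =? 8 then cpair 8 (csnd (sub x))
  else n.

(* Codes of formulas and of programs overlap, so both translations are computed
   side by side: [n] is read as a formula code in the first component and as a
   program code in the second. *)
Definition devar_step (n h : nat) : nat := cpair (devar_form_step n h) (devar_prog_step n h).

Ltac solve_computable :=
  repeat match goal with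
  | |- computable _ (fun _ => ?c) => apply computable_const
  | |- computable _ (fun l => nth _ l 0) => apply computable_proj; lia
  | |- computable _ (fun l => if _ =? _ then _ else _) => apply computable_if_eqb
  | |- computable _ (fun l => lookup _ _ _) => apply computable_lookup
  | |- computable _ (fun l => cpair _ _) => apply computable_cpair
  | |- computable _ (fun l => cfst _) => apply computable_cfst
  | |- computable _ (fun l => csnd _) => apply computable_csnd
  | |- computable _ (fun l => _ + _) => apply computable_add
  | |- computable _ (fun l => _ * _) => apply computable_mul
  end.

Lemma computable_devar_step : computable2 devar_step.
Proof.
  unfold computable2, devar_step, devar_form_step, devar_prog_step.
  cbn [code_form code_prog devar_form devar_prog]. solve_computable.
Qed.

Lemma computable_devar_code : computable1 (fun n => cfst (course_of_values devar_step n)).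
Proof.
  apply computable_cfst. unfold course_of_values.
  apply computable_app2; [exact computable_devar_step| |].
  - apply computable_proj; lia.
  - apply computable_app1; [apply computable_history, computable_devar_step|].
    apply computable_proj; lia.
Qed.

Lemma subcode_lt_l t a b : 0 < t -> a < cpair t (cpair a b).
Proof. intros. pose proof (lt_cpair_r t (cpair a b)). pose proof (le_cpair_l a b). lia. Qed.

Lemma subcode_lt_r t a b : 0 < t -> b < cpair t (cpair a b).
Proof. intros. pose proof (lt_cpair_r t (cpair a b)). pose proof (le_cpair_r a b). lia. Qed.

Lemma cfst_course_of_values_devar n :
  cfst (course_of_values devar_step n) = devar_form_step n (history devar_step n).
Proof. apply cfst_cpair. Qed.

Lemma csnd_course_of_values_devar n :
  csnd (course_of_values devar_step n) = devar_prog_step n (history devar_step n).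
Proof. apply csnd_cpair. Qed.

(* Matching syntactically: a plain [rewrite ?cfst_cpair] would try to unify
   [cpair ?a ?b] with numerals and lookups and unfold the arithmetic. *)
Ltac simpl_cpair :=
  repeat match goal with
  | |- context [cfst (cpair ?a ?b)] => rewrite (cfst_cpair a b)
  | |- context [csnd (cpair ?a ?b)] => rewrite (csnd_cpair a b)
  end.

Lemma course_of_values_devar_step :
  (forall phi, cfst (course_of_values devar_step (code_form phi)) = code_form (devar_form phi)) /\
  (forall a, csnd (course_of_values devar_step (code_prog a)) = code_prog (devar_prog a)).
Proof.
  apply form_prog_ind; intros;
    first [rewrite cfst_course_of_values_devar; unfold devar_form_step
          | rewrite csnd_course_of_values_devar; unfold devar_prog_step];
    cbn [code_form code_prog]; cbv beta zeta; simpl_cpair; cbn [Nat.eqb];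
    rewrite ?lookup_history
      by first [apply subcode_lt_l; lia | apply subcode_lt_r; lia | apply lt_cpair_r; lia];
    cbn [devar_form devar_prog code_form code_prog]; congruence.
Qed.

Theorem theorem5 :
  exists f : form -> form,
    computable_form_fun f /\
    (forall phi : form, var_free (f phi)) /\
    (forall phi : form, valid phi <-> valid (f phi)).
Proof.
  exists devar_form. split; [|split].
  - destruct computable_devar_code as [p Hp]. exists p. intros phi.
    rewrite <- (proj1 course_of_values_devar_step).
    exact (Hp [code_form phi] eq_refl).
  - exact (proj1 var_free_devar).
  - exact valid_devar.
Qed.
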